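(* A ring $R$ is feckly clean if and only if $J\text{-spec}(R)$ is strongly zero-dimensional.
   Context: Rings are associative with identity, not necessarily commutative; $J(R)$ is the Jacobson radical. An element $u\in R$ is full if $RuR=R$. An element $a\in R$ is feckly clean if there exist $e\in R$ and a full element $u\in R$ with $a=e+u$ and $eR(1-e)\subseteq J(R)$; $R$ is feckly clean if every element is feckly clean. $J\text{-spec}(R)$ is the set of all prime (two-sided) ideals $P$ of $R$ with $J(R)\subseteq P$, topologized so that the closed sets are exactly the sets $W(I)=\{P\in J\text{-spec}(R): I\subseteq P\}$ for ideals $I$ of $R$. A topological space $X$ is strongly zero-dimensional if for any two disjoint closed sets $A,B\subseteq X$ there exist disjoint clopen sets $C_1,C_2$ with $A\subseteq C_1$ and $B\subseteq C_2$. *)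

From HB Require Import structures.
From mathcomp Require Import all_boot all_order all_algebra.
Set Implicit Arguments. Unset Strict Implicit. Unset Printing Implicit Defensive.
Import GRing.Theory.
Local Open Scope ring_scope.

Section RingDefs.
Variable R : pzRingType.

Definition left_ideal (I : R -> Prop) : Prop :=
  I 0 /\ (forall x y, I x -> I y -> I (x + y)) /\ (forall r x, I x -> I (r * x)).

Definition ideal (I : R -> Prop) : Prop :=
  I 0 /\ (forall x y, I x -> I y -> I (x + y)) /\
  (forall r x, I x -> I (r * x)) /\ (forall r x, I x -> I (x * r)).

Definition maximal_left_ideal (M : R -> Prop) : Prop :=
  left_ideal M /\ ~ M 1 /\
  (forall N, left_ideal N -> ~ N 1 -> (forall x, M x -> N x) -> forall x, N x -> M x).

Definition jacobson (x : R) : Prop :=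
  forall M, maximal_left_ideal M -> M x.

(* u is full: RuR = R, i.e. 1 is a finite sum of elements a u b *)
Definition full (u : R) : Prop :=
  exists (n : nat) (a b : 'I_n -> R), \sum_(i < n) a i * u * b i = 1.

Definition feckly_clean_elt (a : R) : Prop :=
  exists e u : R, full u /\ a = e + u /\ (forall r, jacobson (e * r * (1 - e))).

Definition feckly_clean : Prop := forall a : R, feckly_clean_elt a.

Definition prime_ideal (P : R -> Prop) : Prop :=
  ideal P /\ ~ P 1 /\
  (forall A B : R -> Prop, ideal A -> ideal B ->
     (forall a b, A a -> B b -> P (a * b)) ->
     (forall a, A a -> P a) \/ (forall b, B b -> P b)).

Definition Jspec : Type :=
  { P : R -> Prop | prime_ideal P /\ (forall x, jacobson x -> P x) }.

Definition W (I : R -> Prop) : Jspec -> Prop :=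
  fun P => forall x, I x -> proj1_sig P x.

Definition Jspec_closed (S : Jspec -> Prop) : Prop :=
  exists I : R -> Prop, ideal I /\ (forall P, S P <-> W I P).

End RingDefs.

(* a space given by its carrier and its family of closed sets *)
Definition clopen (X : Type) (closed : (X -> Prop) -> Prop) (C : X -> Prop) : Prop :=
  closed C /\ closed (fun x => ~ C x).

Definition strongly_zero_dimensional (X : Type) (closed : (X -> Prop) -> Prop) : Prop :=
  forall A B : X -> Prop, closed A -> closed B -> (forall x, A x -> B x -> False) ->
  exists C1 C2 : X -> Prop, clopen closed C1 /\ clopen closed C2 /\
    (forall x, C1 x -> C2 x -> False) /\
    (forall x, A x -> C1 x) /\ (forall x, B x -> C2 x).

(* The points of J-spec(R) include the cores (M : R) of the maximal left ideals M, so
   they intersect to J(R), every proper ideal lies in one of them, and u is full iff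
   it lies in none.  Hence W(I) and W(K) are disjoint iff I + K = R.  If eR(1-e) lies
   in J(R), primeness puts exactly one of e, 1 - e in each point, so W(e) is clopen
   with complement W(1-e); conversely a clopen C yields 1 = i + k with i vanishing on C
   and k off C, and then kR(1-k) = kRi lies in J(R).
   Given disjoint W(I), W(K), write 1 = i + k and k = e + u with u full: as u is in no
   point, W(I) lies in W(e) and W(K) in W(1-e).  Given a, separate W(a) from W(1-a)
   by a clopen C; the resulting k gives a = k + (a - k) with a - k in no point. *)

From mathcomp Require Import all_boot all_order all_algebra.
From mathcomp Require Import boolp classical_sets.
Import GRing.Theory.
Set Implicit Arguments. Unset Strict Implicit. Unset Printing Implicit Defensive.
Local Open Scope ring_scope.

Section Ideals.
Variable R : pzRingType.
Implicit Types (I P : R -> Prop) (r x y z : R).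

Lemma ideal_left I : ideal I -> left_ideal I.
Proof. by move=> [I0 [ID [IMl _]]]. Qed.

Lemma idealD I x y : ideal I -> I x -> I y -> I (x + y).
Proof. by case=> _ [ID _]; apply: ID. Qed.

Lemma idealMl I r x : ideal I -> I x -> I (r * x).
Proof. by case=> _ [_ [IMl _]]; apply: IMl. Qed.

Lemma idealMr I r x : ideal I -> I x -> I (x * r).
Proof. by case=> _ [_ [_ IMr]]; apply: IMr. Qed.

Lemma idealB I x y : ideal I -> I x -> I y -> I (x - y).
Proof. by move=> HI Ix Iy; rewrite -mulN1r; apply: idealD => //; apply: idealMl. Qed.

Lemma ideal_sum I n (F : 'I_n -> R) :
  ideal I -> (forall i, I (F i)) -> I (\sum_(i < n) F i).
Proof. by move=> [I0 [ID _]] IF; apply: big_ind. Qed.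

Lemma ideal_proper_subr1 I x : ideal I -> ~ I 1 -> I x -> ~ I (1 - x).
Proof. by move=> HI I1 Ix Ix'; apply: I1; rewrite -(subrK x 1); apply: idealD. Qed.

Definition principal_ideal x : R -> Prop := fun z =>
  exists (n : nat) (a b : 'I_n -> R), \sum_(i < n) a i * x * b i = z.

Lemma principal_idealP x : ideal (principal_ideal x).
Proof.
split; first by exists 0%N, (fun=> 0), (fun=> 0); rewrite big_ord0.
split.
  move=> _ _ [n1 [a1 [b1 <-]]] [n2 [a2 [b2 <-]]].
  pose glue (c1 : 'I_n1 -> R) (c2 : 'I_n2 -> R) i :=
    match split i with inl j => c1 j | inr k => c2 k end.
  exists (n1 + n2)%N, (glue a1 a2), (glue b1 b2).
  by rewrite big_split_ord /glue; congr (_ + _); apply: eq_bigr => i _;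
    rewrite (unsplitK (inl i), unsplitK (inr i)).
split.
  move=> r _ [n [a [b <-]]]; exists n, (fun i => r * a i), b.
  by rewrite mulr_sumr; apply: eq_bigr => i _; rewrite !mulrA.
move=> r _ [n [a [b <-]]]; exists n, a, (fun i => b i * r).
by rewrite mulr_suml; apply: eq_bigr => i _; rewrite !mulrA.
Qed.

Lemma principal_ideal_self x : principal_ideal x x.
Proof. by exists 1%N, (fun=> 1), (fun=> 1); rewrite big_ord1 mul1r mulr1. Qed.

Lemma principal_ideal_min I x : ideal I -> I x -> forall z, principal_ideal x z -> I z.
Proof.
move=> HI Ix _ [n [a [b <-]]].
by apply: ideal_sum => // i; apply: idealMr => //; apply: idealMl.
Qed.

Lemma prime_idealM P x y :
  prime_ideal P -> (forall r, P (x * r * y)) -> P x \/ P y.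
Proof.
move=> [HP [_ Pprime]] Pxy.
have Pxy' a b : principal_ideal x a -> principal_ideal y b -> P (a * b).
  move=> [n [c [d <-]]] Yb; rewrite mulr_suml; apply: ideal_sum => // i.
  rewrite -!mulrA; apply: idealMl => //.
  have [m [c' [d' <-]]] : principal_ideal y (d i * b).
    exact: idealMl (principal_idealP y) Yb.
  rewrite mulr_sumr; apply: ideal_sum => // j.
  by rewrite !mulrA; apply: idealMr.
have [XP|YP] := Pprime _ _ (principal_idealP x) (principal_idealP y) Pxy'.
  by left; apply: XP; apply: principal_ideal_self.
by right; apply: YP; apply: principal_ideal_self.
Qed.

End Ideals.

Section MaximalLeftIdeals.
Variable R : pzRingType.
Implicit Types (N M : R -> Prop) (x y z : R).

Lemma left_ideal_bigcup (F : (R -> Prop) -> Prop) X0 :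
  F X0 -> (forall X, F X -> left_ideal X) -> total_on F subset ->
  left_ideal (fun x => exists2 X, F X & X x).
Proof.
move=> FX0 Fli Ftot; split; first by exists X0 => //; case: (Fli X0 FX0).
split; last by move=> r x [X FX Xx]; exists X => //; case: (Fli X FX) => _ [_]; apply.
move=> x y [X FX Xx] [Y FY Yy].
have [XY|YX] := Ftot X Y FX FY.
  by exists Y => //; case: (Fli Y FY) => _ [YD _]; apply: YD => //; apply: XY.
by exists X => //; case: (Fli X FX) => _ [XD _]; apply: XD => //; apply: YX.
Qed.

Lemma exists_maximal_left_ideal N :
  left_ideal N -> ~ N 1 -> exists2 M, maximal_left_ideal M & forall x, N x -> M x.
Proof.
move=> HN N1.
pose T := {X : R -> Prop | [/\ left_ideal X, ~ X 1 & forall x, N x -> X x]}.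
pose le (X Y : T) := `[< forall x, sval X x -> sval Y x >].
(* Adjoining N to a chain gives an upper bound even for the empty chain. *)
have chain_ub A : total_on A le -> exists U, forall X, A X -> le X U.
  move=> Atot; pose F Y := Y = N \/ exists2 X, A X & sval X = Y.
  have NX (X : T) x : N x -> sval X x by case: (svalP X) => _ _; apply.
  have Ftot : total_on F subset.
    move=> _ _ [-> | [X AX <-]] [-> | [Y AY <-]].
    - by left.
    - by left; apply: NX.
    - by right; apply: NX.
    - by have [/asboolP | /asboolP] := Atot X Y AX AY; [left | right].
  have Fli Y : F Y -> left_ideal Y by move=> [-> // | [X _ <-]]; case: (svalP X).
  have F1 Y : F Y -> ~ Y 1 by move=> [-> // | [X _ <-]]; case: (svalP X).
  have Uli := left_ideal_bigcup (or_introl erefl) Fli Ftot.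
  have U1 : ~ (exists2 Y, F Y & Y 1) by case=> Y /F1.
  exists (exist _ _ (And3 Uli U1 (fun x Nx => ex_intro2 _ _ N (or_introl erefl) Nx))).
  by move=> X AX; apply/asboolP => x Xx; exists (sval X) => //; right; exists X.
have [|X Y Z /asboolP XY /asboolP YZ|//|[M [Mli M1 NM]] Mmax] :=
  ZL_preorder (exist _ N (And3 HN N1 (fun _ => id))) (R := le).
- by move=> X; apply/asboolP.
- by apply/asboolP => x /XY /YZ.
exists M => //; split=> //; split=> // M' M'li M'1 MM'.
have := Mmax (exist _ M' (And3 M'li M'1 (fun x Nx => MM' x (NM x Nx)))).
by move=> /(_ (asboolT MM'))/asboolP.
Qed.

Lemma maximal_left_ideal_comax M z :
  maximal_left_ideal M -> ~ M z -> exists t m, M m /\ m + t * z = 1.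
Proof.
move=> [[M0 [MD MMl]] [M1 Mmax]] Mz; apply: contrapT => noComax.
pose K w := exists t m, M m /\ m + t * z = w.
apply: Mz; apply: (Mmax K).
- split; first by exists 0, 0; rewrite mul0r addr0.
  split=> [_ _ [t1 [m1 [Mm1 <-]]] [t2 [m2 [Mm2 <-]]] | r _ [t [m [Mm <-]]]].
    by exists (t1 + t2), (m1 + m2); rewrite mulrDl addrACA; split=> //; apply: MD.
  by exists (r * t), (r * m); rewrite mulrDr mulrA; split=> //; apply: MMl.
- by move=> [t [m K1]]; apply: noComax; exists t, m.
- by move=> m Mm; exists 0, m; rewrite mul0r addr0.
- by exists 1, 0; rewrite mul1r add0r.
Qed.

Lemma maximal_left_ideal_colon M y :
  maximal_left_ideal M -> ~ M y -> maximal_left_ideal (fun r => M (r * y)).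
Proof.
move=> HM My; have [[M0 [MD MMl]] [M1 _]] := HM.
split.
  split; first by rewrite mul0r.
  split=> [a b Ma Mb | r x Mx]; first by rewrite mulrDl; apply: MD.
  by rewrite -mulrA; apply: MMl.
split=> [|N [_ [ND NMl]] N1 MN x Nx]; first by rewrite mul1r.
apply: contrapT => Mxy; apply: N1.
have [t [m [Mm tm1]]] := maximal_left_ideal_comax HM Mxy.
(* [(1 - y t x) y = y m] lies in [M], so [1 - y t x] and [y t x] both lie in [N]. *)
have N1ytx : N (1 - y * t * x).
  apply: MN; rewrite mulrBl mul1r -[y in y - _]mulr1 -tm1.
  by rewrite mulrDr !mulrA addrK; apply: MMl.
by rewrite -(subrK (y * t * x) 1); apply: ND => //; apply: NMl.
Qed.

Lemma jacobsonMr j y : jacobson j -> jacobson (j * y).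
Proof.
move=> Jj M HM; have [My | My] := pselect (M y).
  by case: HM => [[_ [_ MMl]] _]; apply: MMl.
exact: Jj _ (maximal_left_ideal_colon HM My).
Qed.

(* The largest two-sided ideal in [M], written (M : R) in the paper. *)
Definition ideal_core M : R -> Prop := fun r => forall y, M (r * y).

Lemma ideal_core_prime M : maximal_left_ideal M -> prime_ideal (ideal_core M).
Proof.
move=> HM; have [[M0 [MD MMl]] [M1 _]] := HM.
split.
  split; first by move=> y; rewrite mul0r.
  split; first by move=> a b Ma Mb y; rewrite mulrDl; apply: MD.
  by split=> r x Mx y; rewrite -mulrA //; apply: MMl.
split; first by move=> /(_ 1); rewrite mulr1.
move=> A B [_ [_ [_ AMr]]] [_ [_ [_ BMr]]] AB.
have [|] := pselect (forall a, A a -> ideal_core M a); first by left.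
move=> /existsNP[a /not_implyP[Aa /existsNP[s Mas]]]; right => b Bb y.
apply: contrapT => Mby; apply: Mas.
have [t [m [Mm tm1]]] := maximal_left_ideal_comax HM Mby.
rewrite -[a * s]mulr1 -tm1 mulrDr; apply: MD; first exact: MMl.
by have := AB _ _ (AMr t _ (AMr s _ Aa)) (BMr y _ Bb) 1; rewrite !mulrA mulr1.
Qed.

Lemma jacobson_sub_ideal_core M x :
  maximal_left_ideal M -> jacobson x -> ideal_core M x.
Proof. by move=> HM Jx y; apply: jacobsonMr. Qed.

End MaximalLeftIdeals.

Section JSpectrum.
Variable R : pzRingType.
Implicit Types (P : Jspec R) (I K T : R -> Prop) (C : Jspec R -> Prop) (e x : R).

Lemma Jspec_prime P : prime_ideal (sval P).
Proof. by case: (svalP P). Qed.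

Lemma Jspec_ideal P : ideal (sval P).
Proof. by case: (Jspec_prime P). Qed.

Lemma Jspec_proper P : ~ sval P 1.
Proof. by case: (Jspec_prime P) => _ []. Qed.

Lemma Jspec_jacobson P x : jacobson x -> sval P x.
Proof. by case: (svalP P) => _; apply. Qed.

Lemma Jspec_subr1 P x : sval P x -> ~ sval P (1 - x).
Proof. by apply: ideal_proper_subr1 (Jspec_ideal P) _; apply: Jspec_proper. Qed.

Definition Jspec_of_maximal M (HM : maximal_left_ideal M) : Jspec R :=
  exist _ (ideal_core M) (conj (ideal_core_prime HM) (fun x => jacobson_sub_ideal_core HM)).

Lemma ideal_sub_Jspec T : ideal T -> ~ T 1 -> exists P, forall x, T x -> sval P x.
Proof.
move=> HT T1; have [M HM TM] := exists_maximal_left_ideal (ideal_left HT) T1.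
by exists (Jspec_of_maximal HM) => x Tx y; apply: TM; apply: idealMr.
Qed.

Lemma jacobson_Jspec x : (forall P, sval P x) -> jacobson x.
Proof. by move=> Px M HM; have := Px (Jspec_of_maximal HM) 1; rewrite /= mulr1. Qed.

Lemma fullP u : full u <-> forall P, ~ sval P u.
Proof.
split=> [fu P Pu | nPu].
  exact: Jspec_proper (principal_ideal_min (Jspec_ideal P) Pu fu).
apply: contrapT => /(ideal_sub_Jspec (principal_idealP u))[P uP].
by apply: (nPu P); apply: uP _ (principal_ideal_self u).
Qed.

Lemma W_principal x P : W (principal_ideal x) P <-> sval P x.
Proof.
split=> [|Px]; first by apply; apply: principal_ideal_self.
by apply: principal_ideal_min => //; apply: Jspec_ideal.
Qed.

Lemma Jspec_closed_principal x : Jspec_closed (W (principal_ideal x)).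
Proof. by exists (principal_ideal x); split=> //; apply: principal_idealP. Qed.

Lemma W_disjoint_comax I K : ideal I -> ideal K ->
  (forall P, W I P -> W K P -> False) -> exists i k, [/\ I i, K k & i + k = 1].
Proof.
move=> HI HK disjIK; apply: contrapT => noComax.
pose S z := exists i k, [/\ I i, K k & i + k = z].
have HS : ideal S.
  split; first by exists 0, 0; rewrite addr0; split=> //; [case: HI | case: HK].
  split; first move=> _ _ [i1 [k1 [Ii1 Kk1 <-]]] [i2 [k2 [Ii2 Kk2 <-]]].
    by exists (i1 + i2), (k1 + k2); rewrite addrACA; split=> //; apply: idealD.
  split=> r _ [i [k [Ii Kk <-]]].
    by exists (r * i), (r * k); rewrite mulrDr; split=> //; apply: idealMl.
  by exists (i * r), (k * r); rewrite mulrDl; split=> //; apply: idealMr.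
have [|P SP] := ideal_sub_Jspec HS; first by move=> [i [k ik]]; apply: noComax; exists i, k.
apply: (disjIK P) => [i Ii | k Kk]; apply: SP.
  by exists i, 0; rewrite addr0; split=> //; case: HK.
by exists 0, k; rewrite add0r; split=> //; case: HI.
Qed.

Lemma Jspec_cover_idem e : (forall r, jacobson (e * r * (1 - e))) ->
  forall P, sval P e \/ sval P (1 - e).
Proof.
by move=> Je P; apply: prime_idealM (Jspec_prime P) _ => r; apply: Jspec_jacobson.
Qed.

Lemma clopen_W_principal x : (forall P, sval P x \/ sval P (1 - x)) ->
  clopen (@Jspec_closed R) (W (principal_ideal x)).
Proof.
move=> cover; split; first exact: Jspec_closed_principal.
exists (principal_ideal (1 - x)); split=> [|P]; first exact: principal_idealP.
rewrite !W_principal; split=> [nPx | Px' Px]; first by case: (cover P).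
exact: Jspec_subr1 Px Px'.
Qed.

Lemma clopen_split C : clopen (@Jspec_closed R) C ->
  exists i k, [/\ i + k = 1, forall P, C P -> sval P i & forall P, ~ C P -> sval P k].
Proof.
move=> [[I [HI CI]] [K [HK CK]]].
have [|i [k [Ii Kk ik]]] := W_disjoint_comax HI HK.
  by move=> P /CI CP /CK; apply.
by exists i, k; split=> // P; [move/CI; apply | move/CK; apply].
Qed.

Lemma feckly_clean_strongly_zero_dimensional :
  feckly_clean R -> strongly_zero_dimensional (@Jspec_closed R).
Proof.
move=> fcR A B [I [HI AI]] [K [HK BK]] disjAB.
have [|i [k [Ii Kk ik]]] := W_disjoint_comax HI HK.
  by move=> P /AI AP /BK; apply: disjAB.
have [e [u [/fullP fu [keu Je]]]] := fcR k.
have ue : u = k - e by rewrite keu addrAC subrr add0r.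
have ki : k = 1 - i by rewrite -ik addrAC subrr add0r.
have cover := Jspec_cover_idem Je.
have cover' P : sval P (1 - e) \/ sval P (1 - (1 - e)) by rewrite subKr or_comm.
exists (W (principal_ideal e)), (W (principal_ideal (1 - e))).
split; [exact: clopen_W_principal | split; first exact: clopen_W_principal].
split=> [P|]; first by rewrite !W_principal; apply: Jspec_subr1.
split=> P; rewrite W_principal.
- move=> /AI /(_ i Ii) Pi; case: (cover P) => // Pe'; case: (fu P).
  have -> : u = 1 - e - i by rewrite ue ki addrAC.
  exact: idealB (Jspec_ideal P) Pe' Pi.
- move=> /BK /(_ k Kk) Pk; case: (cover' P); rewrite ?subKr // => Pe; case: (fu P).
  rewrite ue; exact: idealB (Jspec_ideal P) Pk Pe.
Qed.

Lemma strongly_zero_dimensional_feckly_clean :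
  strongly_zero_dimensional (@Jspec_closed R) -> feckly_clean R.
Proof.
move=> szdR a.
have disj P : W (principal_ideal a) P -> W (principal_ideal (1 - a)) P -> False.
  by rewrite !W_principal; apply: Jspec_subr1.
have [C1 [C2 [C1clopen [_ [C12 [aC1 a'C2]]]]]] :=
  szdR _ _ (Jspec_closed_principal a) (Jspec_closed_principal (1 - a)) disj.
have [i [k [ik C1i nC1k]]] := clopen_split C1clopen.
exists k, (a - k); split; last split; last first.
- move=> r; rewrite -ik addrK; apply: jacobson_Jspec => P.
  have [/C1i Pi | /nC1k Pk] := pselect (C1 P); first exact: idealMl (Jspec_ideal P) Pi.
  by apply: idealMr (Jspec_ideal P) _; apply: idealMr (Jspec_ideal P) Pk.
- by rewrite addrC subrK.
apply/fullP => P Pak; have [C1P | nC1P] := pselect (C1 P).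
  apply: (C12 P C1P); apply: a'C2; rewrite W_principal.
  have -> : 1 - a = i - (a - k) by rewrite -ik opprB addrA.
  exact: idealB (Jspec_ideal P) (C1i P C1P) Pak.
apply/nC1P/aC1; rewrite W_principal -(subrK k a).
exact: idealD (Jspec_ideal P) Pak (nC1k P nC1P).
Qed.

End JSpectrum.

Theorem theorem3p3 (R : pzRingType) :
  feckly_clean R <-> strongly_zero_dimensional (@Jspec_closed R).
Proof.
split; first exact: feckly_clean_strongly_zero_dimensional.
exact: strongly_zero_dimensional_feckly_clean.
Qed.
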